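(* Assume in addition that $\lambda_A>0$ and that the dataset is balanced, i.e. $s_{N+1}=s_1$. Let $\alpha=1/8$ and let $M$ be a positive integer with $M\ge 16/\lambda_A$ (the paper takes $M=16/\lambda_A$). Then the iterates of TD-SVRG (Algorithm 1) satisfy, for every $m\ge0$, $$\mathbb E[f_d(\tilde\theta_m)]\le\left(\tfrac23\right)^m f_d(\tilde\theta_0).$$
   Context: Finite-sample setting. Let $\mathcal S$ be a finite state space, $\phi:\mathcal S\to\mathbb R^d$ a feature map with $\|\phi(s)\|_2\le 1$ for all $s$, $r:\mathcal S\times\mathcal S\to\mathbb R$ a reward function and $\gamma\in[0,1)$. For a pair of states $(s,s')$ and $\theta\in\mathbb R^d$ let $g_{s,s'}(\theta)=(r(s,s')+\gamma\phi(s')^T\theta-\phi(s)^T\theta)\phi(s)$. A dataset is a state trajectory $s_1,\dots,s_{N+1}$, giving the $N$ pairs $(s_t,s_{t+1})$, $t=1,\dots,N$. Let $A_d=\frac1N\sum_{t=1}^N\phi(s_t)(\phi(s_t)-\gamma\phi(s_{t+1}))^T$ and $b_d=\frac1N\sum_{t=1}^N r(s_t,s_{t+1})\phi(s_t)$, so that $\bar g(\theta):=\frac1N\sum_{t=1}^N g_{s_t,s_{t+1}}(\theta)=-A_d\theta+b_d$. Assume $A_d$ is nonsingular and let $\theta^*=A_d^{-1}b_d$. Let $\lambda_A$ denote the minimum eigenvalue of $(A_d+A_d^T)/2$. Define $f_d(\theta)=(\theta-\theta^* )^TA_d(\theta-\theta^* )$. Algorithm 1 (TD-SVRG): given $\alpha>0$,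 an integer $M\ge1$ and an initial $\tilde\theta_0\in\mathbb R^d$, for epochs $m=1,2,\dots$: set $\tilde\theta=\tilde\theta_{m-1}$, compute $\bar g(\tilde\theta)$, set $\theta_0=\tilde\theta$; for $t=1,\dots,M$ draw an index $i_t$ uniformly from $\{1,\dots,N\}$, independently of everything else, put $(s,s')=(s_{i_t},s_{i_t+1})$, $v_t=g_{s,s'}(\theta_{t-1})-g_{s,s'}(\tilde\theta)+\bar g(\tilde\theta)$ and $\theta_t=\theta_{t-1}+\alpha v_t$; finally set $\tilde\theta_m=\theta_{t'}$ where $t'$ is drawn uniformly from $\{0,\dots,M-1\}$ independently of everything else. *)

From HB Require Import structures.
From mathcomp Require Import all_boot all_order all_algebra.
From mathcomp Require Import reals.
Set Implicit Arguments. Unset Strict Implicit. Unset Printing Implicit Defensive.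
Import Order.TTheory GRing.Theory Num.Theory.
Local Open Scope ring_scope.

Section TDSVRG.
Variables (R : realType) (S : finType) (d : nat).
Variables (phi : S -> 'cV[R]_d) (r : S -> S -> R) (gamma : R).

Definition dotv (u v : 'cV[R]_d) : R := (u^T *m v) 0 0.

Definition gss (s s' : S) (theta : 'cV[R]_d) : 'cV[R]_d :=
  (r s s' + gamma * dotv (phi s') theta - dotv (phi s) theta) *: phi s.

(* Dataset: trajectory traj 0, ..., traj N (= s_1, ..., s_{N+1});
   pair number i : 'I_N is (traj i, traj i.+1). *)
Variables (N : nat) (traj : nat -> S).

Definition A_d : 'M[R]_d :=
  N%:R^-1 *: \sum_(t < N) (phi (traj t) *m (phi (traj t) - gamma *: phi (traj t.+1))^T).

Definition b_d : 'cV[R]_d :=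
  N%:R^-1 *: \sum_(t < N) (r (traj t) (traj t.+1) *: phi (traj t)).

Definition gbar (theta : 'cV[R]_d) : 'cV[R]_d :=
  N%:R^-1 *: \sum_(t < N) gss (traj t) (traj t.+1) theta.

Definition theta_star : 'cV[R]_d := invmx A_d *m b_d.

Definition f_d (theta : 'cV[R]_d) : R :=
  ((theta - theta_star)^T *m A_d *m (theta - theta_star)) 0 0.

Variable alpha : R.

Definition svrg_step (thetat : 'cV[R]_d) (theta : 'cV[R]_d) (i : 'I_N) : 'cV[R]_d :=
  let s := traj i in let s' := traj i.+1 in
  theta + alpha *: (gss s s' theta - gss s s' thetat + gbar thetat).

Definition inner_iter (thetat : 'cV[R]_d) (idx : seq 'I_N) : 'cV[R]_d :=
  foldl (svrg_step thetat) thetat idx.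

Variable M : nat.

(* Expectation operator of one epoch: (P h)(thetat) = E[h(tilde theta_m) | tilde theta_{m-1} = thetat],
   averaging uniformly over the M i.i.d. uniform indices i_1..i_M in 'I_N
   and the independent uniform t' in {0,...,M-1}; tilde theta_m = theta_{t'}. *)
Definition epoch_exp (h : 'cV[R]_d -> R) (thetat : 'cV[R]_d) : R :=
  ((N ^ M)%:R * M%:R)^-1 *
  \sum_(idx : M.-tuple 'I_N) \sum_(t' < M) h (inner_iter thetat (take t' idx)).

Definition expect_after (m : nat) (h : 'cV[R]_d -> R) (theta0 : 'cV[R]_d) : R :=
  iter m epoch_exp h theta0.

End TDSVRG.

(* Write e = theta - theta_star.  Averaged over the sampled pair, one inner step of
   TD-SVRG with step size 1/8 satisfies
     E |e_t|^2 <= |e_(t-1)|^2 - 3/16 f_d(theta_(t-1)) + 1/16 f_d(theta~):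
   the cross term contributes -2 alpha f_d, and since |phi| <= 1, gamma < 1 and the
   dataset is balanced, the mean square of the per-sample TD direction is at most
   2 f_d.  Telescoping over the M inner steps and averaging over the output index
   gives 3/16 M E f_d(theta~_m) <= |e~|^2 + M/16 f_d(theta~).  Finally
   f_d(theta) >= lambda_A |theta - theta_star|^2 (Rayleigh quotient of the symmetric
   part of A_d, via the complex spectral theorem) and M lambda_A >= 16, so each epoch
   contracts E f_d by the factor 2/3. *)

From HB Require Import structures.
From mathcomp Require Import all_boot all_order all_algebra.
From mathcomp Require Import reals.
From mathcomp Require Import complex spectral sesquilinear ring lra.
Set Implicit Arguments. Unset Strict Implicit. Unset Printing Implicit Defensive.
Import Order.TTheory GRing.Theory Num.Theory.
Local Open Scope ring_scope.

Section NormalSpectralBound.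
Local Open Scope sesquilinear_scope.
Variables (C : numClosedFieldType) (n : nat) (A : 'M[C]_n).
Hypothesis A_normal : A \is normalmx.

Let P := spectralmx A.
Let D := spectral_diag A.
Let AE : A = P ^t* *m diag_mx D *m P.
Proof. by rewrite -invmx_unitary ?spectral_unitarymx //; exact/orthomx_spectralP. Qed.

Lemma eigenvalue_spectral_diag j : eigenvalue A (D 0 j).
Proof.
have Punit : P \in unitmx := spectral_unit A.
apply/eigenvalueP; exists (delta_mx 0 j *m P).
  rewrite [in LHS]AE !mulmxA -invmx_unitary ?spectral_unitarymx //.
  rewrite mulmxK // scalemxAl; congr (_ *m _).
  apply/matrixP => a b; rewrite mul_mx_diag !mxE.
  by case: (b =P j) => [->|]; rewrite ?andbT ?andbF ?mulr0 ?mul1r ?mulr1 ?mul0r // mulrC.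
apply/eqP => /(congr1 (mulmx^~ (invmx P))); rewrite /= mulmxK // mul0mx.
by move/matrixP/(_ 0 j); rewrite !mxE !eqxx /= => /eqP; rewrite oner_eq0.
Qed.

Lemma spectral_quad_form (x : 'cV[C]_n) :
  (x ^t* *m A *m x) 0 0 = \sum_j ((P *m x) j 0)^* * D 0 j * (P *m x) j 0.
Proof.
rewrite AE !mulmxA -[x ^t* *m _]trmxCK !trmx_mul !map_mxM !trmxCK -!mulmxA mulmxA.
by rewrite !mxE; apply: eq_bigr => j _; rewrite mul_mx_diag !mxE.
Qed.

Lemma spectral_sqnorm (x : 'cV[C]_n) :
  (x ^t* *m x) 0 0 = \sum_j ((P *m x) j 0)^* * (P *m x) j 0.
Proof.
have PtP : P ^t* *m P = 1%:M.
  by rewrite -invmx_unitary ?spectral_unitarymx // mulVmx // spectral_unit.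
have -> : x ^t* *m x = (P *m x) ^t* *m (P *m x).
  by rewrite trmx_mul map_mxM -mulmxA (mulmxA _ P) PtP mul1mx.
by rewrite mxE; apply: eq_bigr => j _; rewrite !mxE.
Qed.

Lemma spectral_quad_ge (lam : C) (x : 'cV[C]_n) : (forall j, lam <= D 0 j) ->
  lam * (x ^t* *m x) 0 0 <= (x ^t* *m A *m x) 0 0.
Proof.
move=> lam_le; rewrite spectral_quad_form spectral_sqnorm mulr_sumr -subr_ge0 -sumrB.
apply: sumr_ge0 => j _; set y := (P *m x) j 0.
have -> : y^* * D 0 j * y - lam * (y^* * y) = y * y^* * (D 0 j - lam) by ring.
by rewrite mulr_ge0 ?mul_conjC_ge0 // subr_ge0.
Qed.
End NormalSpectralBound.

Lemma complex_real_Re (R : rcfType) (z : R[i]) : z \is Num.real -> z = (complex.Re z)%:C%C.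
Proof. by case: z => a b; rewrite realE !lecE /= => /orP[]/andP[/eqP h _]; subst. Qed.

Section RealSymmetricRayleigh.
Local Open Scope sesquilinear_scope.
Variables (R : rcfType) (n : nat) (Sm : 'M[R]_n).
Hypothesis Sm_sym : Sm^T = Sm.
Local Notation fc := (real_complex R).

Lemma rayleigh_lower_bound (lam : R) (x : 'cV[R]_n) :
  (forall mu, eigenvalue Sm mu -> lam <= mu) ->
  lam * (x^T *m x) 0 0 <= (x^T *m Sm *m x) 0 0.
Proof.
move=> lam_le; set Sc := map_mx fc Sm.
have conj_real m p (B : 'M[R]_(m, p)) : map_mx Num.conj (map_mx fc B) = map_mx fc B.
  by apply/matrixP => i j; rewrite !mxE /=; exact: conjc_real.
have Sc_herm : Sc \is hermsymmx.
  by apply/is_hermitianmxP; rewrite expr0 scale1r map_trmx conj_real Sm_sym.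
have D_ge j : lam%:C%C <= spectral_diag Sc 0 j.
  have /mxOverP/(_ 0 j) Dj_real := hermitian_spectral_diag_real Sc_herm.
  rewrite (complex_real_Re Dj_real) lecR; apply: lam_le.
  have := eigenvalue_spectral_diag (hermitian_normalmx Sc_herm) j.
  by rewrite {1}(complex_real_Re Dj_real) (eigenvalue_map fc).
have fc_form m (B : 'M[R]_(m, 1)) (u : 'cV[R]_m) :
    fc ((u^T *m B) 0 0) = ((map_mx fc u) ^t* *m map_mx fc B) 0 0.
  by rewrite map_trmx conj_real -map_mxM [RHS]mxE.
rewrite -lecR rmorphM /= fc_form -mulmxA fc_form map_mxM mulmxA.
exact: (spectral_quad_ge (hermitian_normalmx Sc_herm)).
Qed.
End RealSymmetricRayleigh.

Lemma quad_form_sym_part (F : numFieldType) n (A : 'M[F]_n) (x : 'cV[F]_n) :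
  (x^T *m (2%:R^-1 *: (A + A^T)) *m x) 0 0 = (x^T *m A *m x) 0 0.
Proof.
have AT : (x^T *m A^T *m x) 0 0 = (x^T *m A *m x) 0 0.
  have -> : x^T *m A^T *m x = (x^T *m A *m x)^T by rewrite !trmx_mul trmxK mulmxA.
  by rewrite mxE.
rewrite -scalemxAr -scalemxAl mxE mulmxDr mulmxDl mxE AT.
by field.
Qed.

Section Dot.
Variables (R : realType) (d : nat).
Implicit Types (u v w : 'cV[R]_d).

Lemma dotvE u v : dotv u v = \sum_k u k 0 * v k 0.
Proof. by rewrite /dotv mxE; apply: eq_bigr => k _; rewrite mxE. Qed.

Lemma dotvC u v : dotv u v = dotv v u.
Proof. by rewrite !dotvE; apply: eq_bigr => k _; rewrite mulrC. Qed.

Lemma dotvDr u v w : dotv u (v + w) = dotv u v + dotv u w.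
Proof. by rewrite /dotv mulmxDr mxE. Qed.

Lemma dotvZr u v (a : R) : dotv u (a *: v) = a * dotv u v.
Proof. by rewrite /dotv -scalemxAr mxE. Qed.

Lemma dotvNr u v : dotv u (- v) = - dotv u v.
Proof. by rewrite /dotv mulmxN mxE. Qed.

Lemma dotvBr u v w : dotv u (v - w) = dotv u v - dotv u w.
Proof. by rewrite dotvDr dotvNr. Qed.

Lemma dotvDl u v w : dotv (v + w) u = dotv v u + dotv w u.
Proof. by rewrite dotvC dotvDr !(dotvC u). Qed.

Lemma dotvZl u v (a : R) : dotv (a *: v) u = a * dotv v u.
Proof. by rewrite dotvC dotvZr dotvC. Qed.

Lemma dotvNl u v : dotv (- v) u = - dotv v u.
Proof. by rewrite dotvC dotvNr dotvC. Qed.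

Lemma dotvBl u v w : dotv (v - w) u = dotv v u - dotv w u.
Proof. by rewrite dotvDl dotvNl. Qed.

Lemma dotv_sumr n u (F : 'I_n -> 'cV[R]_d) : dotv u (\sum_i F i) = \sum_i dotv u (F i).
Proof. by rewrite /dotv mulmx_sumr summxE. Qed.

Lemma dotv_ge0 u : 0 <= dotv u u.
Proof. by rewrite dotvE; apply: sumr_ge0 => k _; rewrite -expr2 sqr_ge0. Qed.

Lemma dotvDD_le u v : dotv (u + v) (u + v) <= 2%:R * dotv u u + 2%:R * dotv v v.
Proof.
have := dotv_ge0 (u - v).
rewrite !dotvDl !dotvDr !dotvNl !dotvNr (dotvC v u); lra.
Qed.

Lemma dotv_expand u w (a : R) :
  dotv (u + a *: w) (u + a *: w) = dotv u u + 2%:R * a * dotv u w + a ^+ 2 * dotv w w.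
Proof. by rewrite !dotvDl !dotvDr !dotvZl !dotvZr (dotvC w u); ring. Qed.

Lemma mulmx_outer u v w : u *m v^T *m w = dotv v w *: u.
Proof. by rewrite -mulmxA [v^T *m w]mx11_scalar mul_mx_scalar. Qed.

Lemma sum_sq_centered_le n (q : 'I_n -> 'cV[R]_d) (Q : 'cV[R]_d) :
  n%:R *: Q = \sum_j q j ->
  \sum_i dotv (q i - Q) (q i - Q) <= \sum_i dotv (q i) (q i).
Proof.
move=> nQ.
have -> : \sum_i dotv (q i - Q) (q i - Q) = \sum_i dotv (q i) (q i) - n%:R * dotv Q Q.
  rewrite (eq_bigr (fun i => dotv (q i) (q i) - 2%:R * dotv Q (q i) + dotv Q Q)); last first.
    by move=> i _; rewrite !dotvBl !dotvBr (dotvC Q (q i)); ring.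
  rewrite !big_split /= sumrN sumr_const card_ord -mulr_sumr -dotv_sumr -nQ dotvZr.
  by rewrite -mulr_natl; ring.
by rewrite gerBl mulr_ge0 ?ler0n ?dotv_ge0.
Qed.
End Dot.

Section MeanUpdate.
Variables (R : realType) (d n : nat).
Hypothesis n_gt0 : (0 < n)%N.

Lemma mean_sq_update_le (al : R) (x : 'cV[R]_d) (p q : 'I_n -> 'cV[R]_d) :
  n%:R^-1 * \sum_i dotv (x + al *: (q i - p i - n%:R^-1 *: \sum_j q j))
                        (x + al *: (q i - p i - n%:R^-1 *: \sum_j q j))
   <= dotv x x - 2%:R * al * dotv x (n%:R^-1 *: \sum_i p i)
      + al ^+ 2 * (2%:R * (n%:R^-1 * \sum_i dotv (p i) (p i))
                  + 2%:R * (n%:R^-1 * \sum_i dotv (q i) (q i))).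
Proof.
set Q := n%:R^-1 *: \sum_j q j.
have n_neq0 : (n%:R : R) != 0 by rewrite pnatr_eq0 -lt0n.
have nQ : n%:R *: Q = \sum_j q j by rewrite /Q scalerA mulfV // scale1r.
have sum_update : \sum_i (q i - p i - Q) = - \sum_i p i.
  by rewrite !sumrB sumr_const card_ord -scaler_nat nQ addrAC subrr add0r.
have sum_sq_update : \sum_i dotv (q i - p i - Q) (q i - p i - Q)
    <= 2%:R * \sum_i dotv (p i) (p i) + 2%:R * \sum_i dotv (q i) (q i).
  have := sum_sq_centered_le nQ.
  suff : \sum_i dotv (q i - p i - Q) (q i - p i - Q) <=
      \sum_i (2%:R * dotv (q i - Q) (q i - Q) + 2%:R * dotv (p i) (p i)).
    rewrite big_split -!mulr_sumr /=; lra.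
  apply: ler_sum => i _; rewrite addrAC.
  by have := dotvDD_le (q i - Q) (- p i); rewrite dotvNl dotvNr opprK.
under eq_bigr do rewrite dotv_expand.
rewrite !big_split /= sumr_const card_ord -!mulr_sumr -dotv_sumr sum_update.
rewrite dotvNr dotvZr -[dotv x x *+ n]mulr_natr.
have n_inv_ge0 : 0 <= (n%:R : R)^-1 by rewrite invr_ge0 ler0n.
have := ler_wpM2l n_inv_ge0 (ler_wpM2l (sqr_ge0 al) sum_sq_update).
have mn : n%:R^-1 * n%:R = 1 :> R by rewrite mulVf.
move: (n%:R^-1) mn => m mn.
have -> : m * (dotv x x * n%:R + 2%:R * al * - dotv x (\sum_i p i) +
     al ^+ 2 * \sum_i dotv (q i - p i - Q) (q i - p i - Q)) =
   dotv x x * (m * n%:R) - 2%:R * al * (m * dotv x (\sum_i p i)) +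
     m * (al ^+ 2 * \sum_i dotv (q i - p i - Q) (q i - p i - Q)) by ring.
rewrite mn; lra.
Qed.
End MeanUpdate.

Lemma sum_ord_shift_cyclic (V : zmodType) N (g : nat -> V) :
  g N = g 0%N -> \sum_(t < N) g t.+1 = \sum_(t < N) g t.
Proof.
move=> gN; apply: (@addrI _ (g 0%N)).
have -> : g 0%N + \sum_(t < N) g t.+1 = \sum_(t < N.+1) g t.
  by rewrite big_ord_recl; congr (_ + _); apply: eq_bigr => i _; rewrite lift0.
by rewrite big_ord_recr /= gN addrC.
Qed.

Section TDOperator.
Variables (R : realType) (S : finType) (d : nat).
Variables (phi : S -> 'cV[R]_d) (r : S -> S -> R) (gamma : R).
Variables (N : nat) (traj : nat -> S).

Local Notation a t := (phi (traj t)).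
Local Notation c t := (phi (traj t) - gamma *: phi (traj t.+1)).
Local Notation Ad := (A_d phi gamma N traj).
Local Notation ts := (theta_star phi r gamma N traj).

Lemma A_d_mulmx y : Ad *m y = N%:R^-1 *: \sum_(t < N) (dotv (c t) y *: a t).
Proof.
rewrite /A_d -scalemxAl mulmx_suml; congr (_ *: _).
by apply: eq_bigr => t _; rewrite mulmx_outer.
Qed.

Lemma gssB s s' th th' :
  gss phi r gamma s s' th - gss phi r gamma s s' th' =
  - (dotv (phi s - gamma *: phi s') (th - th') *: phi s).
Proof.
rewrite /gss -scalerBl -scaleNr; congr (_ *: _).
by rewrite dotvBl !dotvBr !dotvZl; ring.
Qed.

Lemma f_dE th : f_d phi r gamma N traj th = dotv (th - ts) (Ad *m (th - ts)).
Proof. by rewrite /f_d -mulmxA. Qed.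

Hypothesis Ad_unit : Ad \in unitmx.

Lemma gbarE th : gbar phi r gamma N traj th = - (Ad *m (th - ts)).
Proof.
have Ats : Ad *m ts = b_d phi r N traj by rewrite /theta_star mulKVmx.
rewrite mulmxBr Ats A_d_mulmx /gbar /b_d -scalerBr -scalerN; congr (_ *: _).
rewrite -sumrB -sumrN; apply: eq_bigr => t _.
rewrite /gss -scalerBl -scaleNr; congr (_ *: _).
by rewrite !dotvBl !dotvZl; ring.
Qed.

Hypothesis phi_le1 : forall s, \sum_(k < d) (phi s k 0) ^+ 2 <= 1.
Hypothesis gamma_ge0 : 0 <= gamma.
Hypothesis gamma_lt1 : gamma < 1.
Hypothesis traj_balanced : traj N = traj 0%N.

Lemma dotv_phi_le1 s : dotv (phi s) (phi s) <= 1.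
Proof. by rewrite dotvE; under eq_bigr do rewrite -expr2; exact: phi_le1. Qed.

Lemma mean_sq_td_le y :
  N%:R^-1 * \sum_(t < N) dotv (dotv (c t) y *: a t) (dotv (c t) y *: a t)
   <= 2%:R * dotv y (Ad *m y).
Proof.
rewrite A_d_mulmx dotvZr dotv_sumr mulrA (mulrC 2%:R) -mulrA.
apply: ler_wpM2l; first by rewrite invr_ge0 ler0n.
apply: (@le_trans _ _ (\sum_(t < N) dotv (c t) y ^+ 2)).
  apply: ler_sum => t _; rewrite dotvZl dotvZr mulrA -expr2.
  by apply: ler_piMr; [exact: sqr_ge0 | exact: dotv_phi_le1].
(* Balancedness makes the sums over s_t and over s_(t+1) coincide. *)
have E (t : 'I_N) : 2%:R * dotv y (dotv (c t) y *: a t) - dotv (c t) y ^+ 2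
    = dotv (a t) y ^+ 2 - gamma ^+ 2 * dotv (phi (traj t.+1)) y ^+ 2.
  by rewrite dotvZr dotvBl dotvZl (dotvC y); ring.
rewrite mulr_sumr -subr_ge0 -sumrB (eq_bigr _ (fun t _ => E t)) sumrB -mulr_sumr.
rewrite (@sum_ord_shift_cyclic _ _ (fun k => dotv (phi (traj k)) y ^+ 2)); last first.
  by rewrite traj_balanced.
rewrite -{1}[\sum_(t < N) _]mul1r -mulrBl mulr_ge0 ?sumr_ge0 // => [|t _].
  by rewrite subr_ge0 expr_le1 // ltW.
exact: sqr_ge0.
Qed.

Hypothesis N_gt0 : (0 < N)%N.

Lemma svrg_step_bound (tt th : 'cV[R]_d) :
  N%:R^-1 * \sum_(i < N) dotv (svrg_step phi r gamma traj (8%:R)^-1 tt th i - ts)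
                               (svrg_step phi r gamma traj (8%:R)^-1 tt th i - ts)
  <= dotv (th - ts) (th - ts) - 3%:R / 16%:R * f_d phi r gamma N traj th
     + 16%:R^-1 * f_d phi r gamma N traj tt.
Proof.
set al : R := (8%:R)^-1; set x := th - ts; set xt := tt - ts.
pose p (i : 'I_N) := dotv (c i) x *: a i.
pose q (i : 'I_N) := dotv (c i) xt *: a i.
have stepE (i : 'I_N) : svrg_step phi r gamma traj al tt th i - ts
    = x + al *: (q i - p i - N%:R^-1 *: \sum_j q j).
  rewrite /svrg_step /= gssB gbarE // A_d_mulmx.
  have -> : th - tt = x - xt by rewrite /x /xt opprB addrA subrK.
  by rewrite dotvBr scalerBl opprB /x addrAC.
under eq_bigr do rewrite stepE.
apply: le_trans (mean_sq_update_le N_gt0 al x p q) _.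
have mean_p : N%:R^-1 *: \sum_i p i = Ad *m x by rewrite A_d_mulmx.
rewrite mean_p !f_dE -/x -/xt.
have := mean_sq_td_le x; have := mean_sq_td_le xt.
have -> : al ^+ 2 = 64%:R^-1 by rewrite /al exprVn -natrX.
rewrite /al; lra.
Qed.
End TDOperator.

Lemma sum_tuple_rcons (V : nmodType) (T : finType) k (G : seq T -> V) :
  \sum_(t : k.+1.-tuple T) G t = \sum_(t : k.-tuple T) \sum_(i : T) G (rcons t i).
Proof.
pose h (p : k.-tuple T * T) := rcons_tuple p.1 p.2.
have h_inj : injective h.
  by move=> [t1 i1] [t2 i2] /(congr1 val) /= /rcons_inj [] /val_inj -> ->.
have h_bij : bijective h.
  by apply: inj_card_bij h_inj _; rewrite card_prod !card_tuple expnSr.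
by rewrite (reindex h (onW_bij _ h_bij)) /= pair_big.
Qed.

Section TupleAverage.
Variables (R : numFieldType) (N : nat).
Hypothesis N_gt0 : (0 < N)%N.
Implicit Types G H : seq 'I_N -> R.

Definition avg_tuple k G : R := ((N ^ k)%:R)^-1 * \sum_(t : k.-tuple 'I_N) G t.

Lemma eq_avg_tuple k G H : (forall t : k.-tuple 'I_N, G t = H t) ->
  avg_tuple k G = avg_tuple k H.
Proof. by move=> GH; rewrite /avg_tuple; congr (_ * _); apply: eq_bigr => t _. Qed.

Lemma ler_avg_tuple k G H : (forall t : k.-tuple 'I_N, G t <= H t) ->
  avg_tuple k G <= avg_tuple k H.
Proof.
move=> GH; rewrite /avg_tuple ler_wpM2l ?invr_ge0 ?ler0n //.
by apply: ler_sum => t _.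
Qed.

Lemma avg_tuple_ge0 k G : (forall t : k.-tuple 'I_N, 0 <= G t) -> 0 <= avg_tuple k G.
Proof. by move=> G_ge0; rewrite /avg_tuple mulr_ge0 ?invr_ge0 ?ler0n ?sumr_ge0. Qed.

Lemma avg_tuple0 G : avg_tuple 0 G = G [::].
Proof.
rewrite /avg_tuple expn0 invr1 mul1r (eq_bigr (fun _ => G [::])) => [|t _].
  by rewrite sumr_const card_tuple expn0.
by rewrite tuple0.
Qed.

Lemma avg_tupleS k G :
  avg_tuple k.+1 G = avg_tuple k (fun t => N%:R^-1 * \sum_i G (rcons t i)).
Proof. by rewrite /avg_tuple sum_tuple_rcons -mulr_sumr mulrA expnSr natrM invfM. Qed.

Lemma avg_tuple_affine k G H (a b : R) :
  avg_tuple k (fun t => G t - a * H t + b) = avg_tuple k G - a * avg_tuple k H + b.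
Proof.
have Nk_neq0 : ((N ^ k)%:R : R) != 0 by rewrite pnatr_eq0 expn_eq0 negb_and -lt0n N_gt0.
rewrite /avg_tuple !big_split /= sumrN sumr_const card_tuple card_ord -mulr_sumr.
by rewrite -mulr_natl; field.
Qed.

Lemma avg_tuple_take k j G : (j <= k)%N ->
  avg_tuple k (fun t => G (take j t)) = avg_tuple j G.
Proof.
elim: k => [|k IH]; first by rewrite leqn0 => /eqP->; apply: eq_avg_tuple => t; rewrite tuple0.
rewrite leq_eqVlt ltnS => /orP[/eqP->|j_le_k].
  by apply: eq_avg_tuple => t; rewrite take_oversize // size_tuple.
rewrite avg_tupleS -IH //; apply: eq_avg_tuple => t.
rewrite (eq_bigr (fun _ => G (take j t))) => [|i _]; last first.
  by rewrite -cats1 takel_cat // size_tuple.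
by rewrite sumr_const card_ord -[G _ *+ _]mulr_natl mulrA mulVf ?mul1r // pnatr_eq0 -lt0n.
Qed.
End TupleAverage.

Section EpochOperator.
Variables (R : realType) (S : finType) (d : nat).
Variables (phi : S -> 'cV[R]_d) (r : S -> S -> R) (gamma : R).
Variables (N : nat) (traj : nat -> S) (al : R) (M : nat).
Implicit Types h : 'cV[R]_d -> R.

Local Notation epoch := (epoch_exp phi r gamma N traj al M).

Lemma epoch_expE h tt : (0 < N)%N ->
  epoch h tt = M%:R^-1 *
    \sum_(k < M) avg_tuple k (fun s : seq 'I_N => h (inner_iter phi r gamma traj al tt s)).
Proof.
move=> N_gt0; rewrite /epoch_exp exchange_big /= invfM (mulrC (_ ^-1)) -mulrA mulr_sumr.
apply: congr1; apply: eq_bigr => k _.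
by rewrite -(avg_tuple_take N_gt0 _ (ltnW (ltn_ord k))).
Qed.

Lemma ler_epoch_exp h h' tt : (forall x, h x <= h' x) -> epoch h tt <= epoch h' tt.
Proof.
move=> hh'; rewrite /epoch_exp ler_wpM2l ?invr_ge0 ?mulr_ge0 ?ler0n //.
by apply: ler_sum => t _; apply: ler_sum => k _.
Qed.

Lemma epoch_expZ h (c : R) tt : epoch (fun x => c * h x) tt = c * epoch h tt.
Proof.
rewrite /epoch_exp mulrCA; congr (_ * _).
by rewrite [RHS]mulr_sumr; apply: eq_bigr => t _; rewrite mulr_sumr.
Qed.

Lemma expect_after_geometric h (c : R) m th : 0 <= c ->
  (forall x, epoch h x <= c * h x) ->
  expect_after phi r gamma N traj al M m h th <= c ^+ m * h th.
Proof.
move=> c_ge0 h_contr; rewrite /expect_after.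
elim: m th => [|m IH] th; first by rewrite expr0 mul1r.
rewrite iterS exprSr -mulrA; apply: le_trans (ler_epoch_exp _ IH) _.
by rewrite epoch_expZ ler_wpM2l ?exprn_ge0.
Qed.
End EpochOperator.

Section Contraction.
Variables (R : realType) (S : finType) (d : nat).
Variables (phi : S -> 'cV[R]_d) (r : S -> S -> R) (gamma : R).
Variables (N : nat) (traj : nat -> S).
Hypothesis N_gt0 : (0 < N)%N.
Hypothesis Ad_unit : A_d phi gamma N traj \in unitmx.
Hypothesis phi_le1 : forall s, \sum_(k < d) (phi s k 0) ^+ 2 <= 1.
Hypothesis gamma_ge0 : 0 <= gamma.
Hypothesis gamma_lt1 : gamma < 1.
Hypothesis traj_balanced : traj N = traj 0%N.
Variable lam : R.
Hypothesis lam_le_eigen : forall mu,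
  eigenvalue (2%:R^-1 *: (A_d phi gamma N traj + (A_d phi gamma N traj)^T)) mu -> lam <= mu.
Hypothesis lam_gt0 : 0 < lam.

Local Notation Ad := (A_d phi gamma N traj).
Local Notation ts := (theta_star phi r gamma N traj).
Local Notation f := (f_d phi r gamma N traj).
Local Notation inner tt s := (inner_iter phi r gamma traj 8%:R^-1 tt (s : seq 'I_N)).

Lemma f_d_ge_sqdist th : lam * dotv (th - ts) (th - ts) <= f th.
Proof.
have sym : (2%:R^-1 *: (Ad + Ad^T))^T = 2%:R^-1 *: (Ad + Ad^T).
  by rewrite linearZ /= linearD /= trmxK addrC.
by have := rayleigh_lower_bound sym (th - ts) lam_le_eigen; rewrite quad_form_sym_part.
Qed.

Lemma inner_iter_telescope tt K :
  avg_tuple K (fun s => dotv (inner tt s - ts) (inner tt s - ts))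
    + 3%:R / 16%:R * \sum_(k < K) avg_tuple k (fun s => f (inner tt s))
  <= dotv (tt - ts) (tt - ts) + K%:R / 16%:R * f tt.
Proof.
pose dist s := dotv (inner tt s - ts) (inner tt s - ts).
pose F s := f (inner tt s).
elim: K => [|K IH]; first by rewrite avg_tuple0 big_ord0 mulr0 !mul0r !addr0.
rewrite avg_tupleS big_ord_recr /= -[K.+1]addn1 natrD.
have step (t : K.-tuple 'I_N) :
    N%:R^-1 * \sum_i dist (rcons t i) <= dist t - 3%:R / 16%:R * F t + 16%:R^-1 * f tt.
  rewrite /dist /F /inner_iter; under eq_bigr do rewrite foldl_rcons.
  exact: svrg_step_bound.
have := ler_avg_tuple (G := fun s => N%:R^-1 * \sum_i dist (rcons s i))
  (H := fun s => dist s - 3%:R / 16%:R * F s + 16%:R^-1 * f tt) step.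
by rewrite avg_tuple_affine //; lra.
Qed.

Lemma epoch_contraction M tt : (0 < M)%N -> 16%:R / lam <= M%:R ->
  epoch_exp phi r gamma N traj 8%:R^-1 M f tt <= 2%:R / 3%:R * f tt.
Proof.
move=> M_gt0 M_ge; rewrite epoch_expE // mulrC ler_pdivrMr ?ltr0n //.
have := inner_iter_telescope tt M.
have := avg_tuple_ge0 (k := M) (G := fun s => dotv (inner tt s - ts) (inner tt s - ts))
  (fun t => dotv_ge0 _).
have := f_d_ge_sqdist tt; have := dotv_ge0 (tt - ts).
set E := \sum_(k < M) _; set n := dotv (tt - ts) (tt - ts); set F := f tt.
move=> n_ge0 lam_n_le; have Mlam_ge : 16%:R <= M%:R * lam by rewrite -ler_pdivrMr.
have := ler_wpM2r n_ge0 Mlam_ge; have := ler_wpM2l (ler0n _ M) lam_n_le.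
rewrite mulrA; lra.
Qed.
End Contraction.

Theorem corollary1 (R : realType) (S : finType) (d : nat)
  (phi : S -> 'cV[R]_d) (r : S -> S -> R) (gamma : R)
  (N : nat) (traj : nat -> S) (M : nat) (lambda_A : R) (theta0 : 'cV[R]_d) (m : nat) :
  (0 < N)%N ->
  (forall s, \sum_(k < d) (phi s k 0) ^+ 2 <= 1) ->
  0 <= gamma -> gamma < 1 ->
  A_d phi gamma N traj \in unitmx ->
  eigenvalue ((2%:R)^-1 *: (A_d phi gamma N traj + (A_d phi gamma N traj)^T)) lambda_A ->
  (forall mu, eigenvalue ((2%:R)^-1 *: (A_d phi gamma N traj + (A_d phi gamma N traj)^T)) mu ->
     lambda_A <= mu) ->
  0 < lambda_A ->
  traj N = traj 0%N ->
  (0 < M)%N ->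
  16%:R / lambda_A <= M%:R ->
  expect_after phi r gamma N traj (8%:R)^-1 M m (f_d phi r gamma N traj) theta0
    <= (2%:R / 3%:R) ^+ m * f_d phi r gamma N traj theta0.
Proof.
move=> N_gt0 phi_le1 gamma_ge0 gamma_lt1 Ad_unit _ lam_le lam_gt0 balanced M_gt0 M_ge.
apply: expect_after_geometric; first by rewrite divr_ge0 ?ler0n.
move=> th; exact: (epoch_contraction r N_gt0 Ad_unit phi_le1 gamma_ge0 gamma_lt1 balanced
  lam_le lam_gt0 th M_gt0 M_ge).
Qed.
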